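(* Let $M=(E,r)$ be a polymatroid, fix a total order on $E$, and let $t\ge0$ be an integer. For each base $f$ of $M$ let $A(f)\subseteq E$ be the set of elements internally active with respect to $f$. Then the sets $\big(f+t\nabla_{A(f)}\big)\cap\mathbb Z^E$, for $f$ ranging over the bases of $M$, are pairwise disjoint and their union is $(P(M)+t\nabla)\cap\mathbb Z^E$. Here $f+t\nabla_{A(f)}$ has dimension $|A(f)|-1=|E|-1-\bar\iota(f)$, where $\bar\iota(f)=|E\setminus A(f)|$.
   Context: A polymatroid $M=(E,r)$ is a function $r:2^E\to\mathbb Z_{\ge0}$ with $r(\emptyset)=0$, $r$ monotone, and $r(X\cup Y)+r(X\cap Y)\le r(X)+r(Y)$. Its bases are the $\mathbf x\in\mathbb Z^E$ with $\sum_{i\in E}x_i=r(E)$ and $\sum_{i\in S}x_i\le r(S)$ for all $S$; $P(M)$ is their convex hull. For nonempty $S\subseteq E$, $\nabla_S=\operatorname{conv}\{-\mathbf e_i:i\in S\}$ and $\nabla=\nabla_E$. A transfer from $u_1$ to $u_2$ is possible in a base $f$ if $f-\mathbf e_{u_1}+\mathbf e_{u_2}$ is again a base. An element $u$ is internally active with respect to $f$ if no transfer is possible in $f$ from $u$ to a smaller element of $E$ (in particular, the smallest element and every $u$ with $f_u=0$ are internally active). *)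

From HB Require Import structures.
From mathcomp Require Import all_boot all_order all_algebra.
Set Implicit Arguments. Unset Strict Implicit. Unset Printing Implicit Defensive.
Import Order.TTheory GRing.Theory Num.Theory.
Local Open Scope ring_scope.

(* Ground set E = 'I_n, totally ordered by the natural order on ordinals. *)

Definition polymatroid (n : nat) (r : {set 'I_n} -> nat) : Prop :=
  [/\ r set0 = 0%N,
      (forall X Y : {set 'I_n}, X \subset Y -> (r X <= r Y)%N) &
      (forall X Y : {set 'I_n}, (r (X :|: Y) + r (X :&: Y) <= r X + r Y)%N)].

Definition is_base (n : nat) (r : {set 'I_n} -> nat) (x : {ffun 'I_n -> int}) : Prop :=
  \sum_i x i = (r setT)%:Z /\
  (forall S : {set 'I_n}, \sum_(i in S) x i <= (r S)%:Z).

Definition transfer (n : nat) (f : {ffun 'I_n -> int}) (u1 u2 : 'I_n) : {ffun 'I_n -> int} :=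
  [ffun i => f i - (i == u1)%:Z + (i == u2)%:Z].

Definition transfer_possible (n : nat) (r : {set 'I_n} -> nat)
  (f : {ffun 'I_n -> int}) (u1 u2 : 'I_n) : Prop :=
  is_base r (transfer f u1 u2).

Definition internally_active (n : nat) (r : {set 'I_n} -> nat)
  (f : {ffun 'I_n -> int}) (u : 'I_n) : Prop :=
  forall v : 'I_n, (v < u)%N -> ~ transfer_possible r f u v.

Definition in_PM (n : nat) (r : {set 'I_n} -> nat) (p : 'I_n -> rat) : Prop :=
  exists s : seq ({ffun 'I_n -> int} * rat),
    [/\ (forall k, k \in s -> is_base r k.1 /\ 0 <= k.2),
        \sum_(k <- s) k.2 = 1 &
        (forall i, p i = \sum_(k <- s) k.2 * (k.1 i)%:~R)].

Definition in_PM_plus_tnabla (n : nat) (r : {set 'I_n} -> nat) (t : nat)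
  (y : {ffun 'I_n -> int}) : Prop :=
  exists (p : 'I_n -> rat) (lam : 'I_n -> rat),
    [/\ in_PM r p,
        (forall i, 0 <= lam i),
        \sum_i lam i = 1 &
        (forall i, (y i)%:~R = p i - t%:R * lam i)].

Definition in_active_simplex (n : nat) (r : {set 'I_n} -> nat) (t : nat)
  (f : {ffun 'I_n -> int}) (y : {ffun 'I_n -> int}) : Prop :=
  exists lam : 'I_n -> rat,
    [/\ (forall i, 0 <= lam i),
        (forall i, lam i != 0 -> internally_active r f i),
        \sum_i lam i = 1 &
        (forall i, (y i)%:~R = (f i)%:~R - t%:R * lam i)].

(* Fix y in (P(M) + t nabla) ∩ Z^E. Then y is an independent vector of M with
   deficit t, i.e. y(S) <= r(S) for all S and y(E) = r(E) - t, so it lies below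
   some base f (augmentation).  Among the bases above y, transfers f -> f - e_u + e_v
   with v < u and y_u < f_u strictly decrease the potential sum_i (f_i - y_i) i;
   at a base g where no such transfer exists, every coordinate with y_u < g_u is
   internally active, so y = g - t lam with lam = (g - y)/t supported on A(g).
   Disjointness: if y lies in the simplices of two bases f <> g, take the smallest
   u with f_u <> g_u, say g_u < f_u.  The exchange property gives j with
   f_j < g_j and g - e_j + e_u a base; then j > u and the lambda of g is
   positive at j, so j is active for g, contradicting the transfer to u < j. *)
From HB Require Import structures.
From mathcomp Require Import all_boot all_order all_algebra.
From mathcomp Require Import zify ring.
Set Implicit Arguments. Unset Strict Implicit. Unset Printing Implicit Defensive.
Import Order.TTheory GRing.Theory Num.Theory.
Local Open Scope ring_scope.

Section Sums.
Variable n : nat.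
Implicit Types (x f : {ffun 'I_n -> int}) (S : {set 'I_n}).

Lemma sum_setT (R : nmodType) (F : 'I_n -> R) : \sum_(i in [set: 'I_n]) F i = \sum_i F i.
Proof. by apply: eq_bigl => i; rewrite in_setT. Qed.

Lemma sum_setU_setI x S1 S2 :
  \sum_(i in S1 :|: S2) x i + \sum_(i in S1 :&: S2) x i =
  \sum_(i in S1) x i + \sum_(i in S2) x i.
Proof.
rewrite !(big_mkcond (fun i => i \in _)) -!big_split /=.
apply: eq_bigr => i _; rewrite in_setU in_setI.
by case: (i \in S1); case: (i \in S2); rewrite /= ?addr0 ?add0r.
Qed.

Lemma sum_eq_mem S i : \sum_(j in S) (j == i)%:Z = (i \in S)%:Z.
Proof.
case: (boolP (i \in S)) => iS; last first.
  by apply: big1 => j jS; case: eqP => // ji; rewrite -ji jS in iS.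
by rewrite (bigD1 i) //= eqxx big1 ?addr0 // => j /andP[_ /negbTE ->].
Qed.

Lemma sum_transfer f u v S :
  \sum_(j in S) transfer f u v j = \sum_(j in S) f j - (u \in S)%:Z + (v \in S)%:Z.
Proof.
under eq_bigr do rewrite ffunE.
by rewrite big_split /= sumrB !sum_eq_mem.
Qed.

Lemma sum_transfer_setT f u v : \sum_j transfer f u v j = \sum_j f j.
Proof. by have := sum_transfer f u v setT; rewrite !sum_setT !in_setT subrK. Qed.

End Sums.

Definition is_baseb n (r : {set 'I_n} -> nat) (x : {ffun 'I_n -> int}) : bool :=
  (\sum_i x i == (r setT)%:Z) && [forall S : {set 'I_n}, \sum_(i in S) x i <= (r S)%:Z].

Lemma is_baseP n (r : {set 'I_n} -> nat) x : reflect (is_base r x) (is_baseb r x).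
Proof.
apply: (iffP andP) => [[/eqP xE /forallP xS] | [xE xS]]; split => //.
  by apply/eqP.
by apply/forallP.
Qed.

Definition indep n (r : {set 'I_n} -> nat) (x : {ffun 'I_n -> int}) : Prop :=
  forall S : {set 'I_n}, \sum_(i in S) x i <= (r S)%:Z.

Definition tight n (r : {set 'I_n} -> nat) (x : {ffun 'I_n -> int})
  (S : {set 'I_n}) : bool :=
  \sum_(i in S) x i == (r S)%:Z.

Section Polymatroid.
Variables (n : nat) (r : {set 'I_n} -> nat).
Hypothesis r_polymatroid : polymatroid r.
Implicit Types (x f g : {ffun 'I_n -> int}) (S : {set 'I_n}).

Lemma tight_setU_setI x S1 S2 : indep r x ->
  tight r x S1 -> tight r x S2 -> tight r x (S1 :|: S2) && tight r x (S1 :&: S2).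
Proof.
case: r_polymatroid => _ _ submod xI /eqP x1 /eqP x2.
have := sum_setU_setI x S1 S2; have := xI (S1 :|: S2); have := xI (S1 :&: S2).
have := submod S1 S2; rewrite x1 x2 /tight => ? ? ? ?; apply/andP; split; apply/eqP; lia.
Qed.

Lemma tight_bigcup x : indep r x -> tight r x (\bigcup_(S | tight r x S) S).
Proof.
move=> xI; apply: (big_ind (tight r x)) => [|S1 S2 t1 t2|//].
  by case: r_polymatroid => r0 _ _; rewrite /tight big_set0 r0.
by case/andP: (tight_setU_setI xI t1 t2).
Qed.

Lemma tight_bigcap x u : is_base r x ->
  tight r x (\bigcap_(S | tight r x S && (u \in S)) S).
Proof.
case=> xE xI; apply: (big_ind (tight r x)) => [|S1 S2 t1 t2|S /andP[] //].
  by rewrite /tight sum_setT xE.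
by case/andP: (tight_setU_setI xI t1 t2).
Qed.

(* Induction on the deficit: a coordinate outside every tight set can be raised. *)
Lemma indep_below_base (k : nat) x : indep r x -> \sum_i x i + k%:Z = (r setT)%:Z ->
  exists2 f, is_base r f & forall i, x i <= f i.
Proof.
elim: k x => [|k IHk] x xI xk.
  by exists x => //; split; rewrite // -xk addr0.
set U := \bigcup_(S | tight r x S) S.
have [i _ iU] : exists2 i, i \in [set: 'I_n] & i \notin U.
  apply/subsetPn; rewrite subTset; apply/negP => /eqP UT.
  have := tight_bigcup xI; rewrite -/U UT /tight sum_setT => /eqP sumE.
  by move: xk; rewrite sumE; lia.
pose x' := [ffun j => x j + (j == i)%:Z].
have sum_x' S : \sum_(j in S) x' j = \sum_(j in S) x j + (i \in S)%:Z.
  by under eq_bigr do rewrite ffunE; rewrite big_split /= sum_eq_mem.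
have x'I : indep r x'.
  move=> S; rewrite sum_x'; case: (boolP (i \in S)) => iS; last by rewrite addr0.
  have : ~~ tight r x S by apply: contra iU => tS; apply/bigcupP; exists S.
  by have := xI S; rewrite /tight; lia.
have [f fB x'f] : exists2 f, is_base r f & forall j, x' j <= f j.
  by apply: IHk => //; rewrite -sum_setT sum_x' in_setT sum_setT -xk -addrA intS.
by exists f => // j; have := x'f j; rewrite ffunE; lia.
Qed.

(* The transfer into u comes out of the minimal tight set of g containing u. *)
Lemma base_exchange f g u : is_base r f -> is_base r g -> g u < f u ->
  exists2 j, f j < g j & transfer_possible r g j u.
Proof.
move=> [_ fI] gB gfu; set T := \bigcap_(S | tight r g S && (u \in S)) S.
have tT : tight r g T by apply: tight_bigcap.
have uT : u \in T by apply/bigcapP => S /andP[].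
have [j jT fgj] : exists2 j, j \in T & f j < g j.
  apply/exists_inP; apply: contraT; rewrite negb_exists_in => /forall_inP gf.
  have : \sum_(i in T) g i < \sum_(i in T) f i.
    rewrite (bigD1 u) // [ltRHS](bigD1 u) //=.
    by apply: ltr_leD => //; apply: ler_sum => i /andP[iT _]; rewrite leNgt gf.
  by have := fI T; move: tT; rewrite /tight => /eqP ->; lia.
exists j => //; case: gB => gE gI; split; first by rewrite sum_transfer_setT.
move=> S; rewrite sum_transfer; have := gI S.
case: (boolP (u \in S)) => uS; case: (boolP (j \in S)) => jS /=; try lia.
have : ~~ tight r g S.
  by apply: contra jS => tS; move/bigcapP: jT; apply; rewrite tS uS.
by move=> nt le; rewrite subr0 lezD1 lt_neqAle le andbT; exact: nt.
Qed.

Lemma active_simplex_disjoint t f g y : is_base r f -> is_base r g ->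
  in_active_simplex r t f y -> in_active_simplex r t g y -> f = g.
Proof.
have smallest_difference f1 f2 u : is_base r f1 -> is_base r f2 ->
    in_active_simplex r t f1 y -> in_active_simplex r t f2 y -> f2 u < f1 u ->
    ~ (forall i : 'I_n, (i < u)%N -> f1 i = f2 i).
  move=> f1B f2B [lam [lam0 _ _ lamy]] [mu [_ muA _ muy]] f21u same.
  have [j f12j transfer_ju] := base_exchange f1B f2B f21u.
  have muj : mu j != 0.
    apply: contraTneq f12j => mu_j; have := muy j; rewrite lamy mu_j mulr0 subr0.
    move=> fj; rewrite -leNgt -(ler_int rat) -fj lerBlDr lerDl.
    exact: mulr_ge0 (ler0n _ _) (lam0 j).
  suff uj : (u < j)%N by apply: muA muj u uj transfer_ju.
  rewrite ltnNge leq_eqVlt negb_or; apply/andP; split.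
    by apply: contraTneq f12j => /ord_inj ->; rewrite -leNgt ltW.
  by apply/negP => /same; lia.
move=> fB gB yf yg.
case: (pickP (fun i => f i != g i)) => [i0 fg_i0|same_all]; last first.
  by apply/ffunP => i; apply/eqP/negbFE/same_all.
case: (@arg_minnP _ i0 (fun i => f i != g i) (fun i : 'I_n => (i : nat)) fg_i0)
  => u fg_u u_min.
have same (i : 'I_n) : (i < u)%N -> f i = g i.
  by move=> iu; apply/eqP; apply: contraTT iu => /u_min; rewrite -leqNgt.
exfalso; case: (ltgtP (f u) (g u)) => [fgu|gfu|].
- by apply: (smallest_difference g f u gB fB yg yf fgu) => i /same ->.
- exact: (smallest_difference f g u fB gB yf yg gfu same).
- by move/eqP; rewrite (negbTE fg_u).
Qed.

End Polymatroid.

Section Descent.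
Variables (n : nat) (r : {set 'I_n} -> nat).
Implicit Types (y f g : {ffun 'I_n -> int}).

Definition weighted_gap y f : int := \sum_i (f i - y i) * (i : nat)%:Z.

Lemma weighted_gap_transfer y f u v :
  weighted_gap y (transfer f u v) = weighted_gap y f - (u : nat)%:Z + (v : nat)%:Z.
Proof.
have sum_eq_mul (i : 'I_n) : \sum_j (j == i)%:Z * (j : nat)%:Z = (i : nat)%:Z.
  by rewrite (bigD1 i) //= eqxx mul1r big1 ?addr0 // => j /negbTE ->; rewrite mul0r.
rewrite /weighted_gap -(sum_eq_mul u) -(sum_eq_mul v) -sumrB -big_split /=.
by apply: eq_bigr => j _; rewrite ffunE; ring.
Qed.

Lemma active_base_above y f : is_base r f -> (forall i, y i <= f i) ->
  exists2 g, is_base r g &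
    (forall i, y i <= g i) /\ (forall i, y i < g i -> internally_active r g i).
Proof.
move=> fB yf; have [N gapN] : exists N : nat, weighted_gap y f < N%:Z.
  by exists `|weighted_gap y f|.+1; lia.
elim: N f fB yf gapN => [|N IHN] f fB yf gapN.
  have : 0 <= weighted_gap y f.
    by apply: sumr_ge0 => i _; rewrite mulr_ge0 // subr_ge0.
  by move: gapN; lia.
case: (boolP [exists i, (y i < f i) &&
        [exists v : 'I_n, (v < i)%N && is_baseb r (transfer f i v)]]).
  case/existsP=> i /andP[yfi /existsP[v /andP[vi /is_baseP tB]]].
  apply: (IHN (transfer f i v) tB) => [j|].
    have := yf j; rewrite ffunE.
    by case: (eqVneq j i) => [->|_]; case: (eqVneq j v) => /=; lia.
  by rewrite weighted_gap_transfer; move: gapN vi; lia.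
move/existsPn=> no_transfer; exists f => //; split=> // i yfi v vi /is_baseP tB.
by move: (no_transfer i); rewrite yfi /=; apply/negP/negPn/existsP; exists v; rewrite vi.
Qed.

End Descent.

Section Covering.
Variables (n : nat) (r : {set 'I_n} -> nat) (t : nat).
Implicit Types (y f g : {ffun 'I_n -> int}) (p : 'I_n -> rat) (S : {set 'I_n}).

Lemma in_PM_sum p : in_PM r p ->
  (forall S, \sum_(i in S) p i <= (r S)%:R) /\ \sum_i p i = (r setT)%:R.
Proof.
case=> s [sB s1 ps].
have sum_p (P : pred 'I_n) :
    \sum_(i | P i) p i = \sum_(k <- s) k.2 * (\sum_(i | P i) k.1 i)%:~R.
  under eq_bigr do rewrite ps; rewrite exchange_big /=.
  by apply: eq_bigr => k _; rewrite mulrz_sumr mulr_sumr.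
have mean (c : rat) : \sum_(k <- s) k.2 * c = c by rewrite -mulr_suml s1 mul1r.
split=> [S|].
  rewrite sum_p -(mean (r S)%:R) big_seq [leRHS]big_seq; apply: ler_sum => k ks.
  have [[_ kI] k0] := sB k ks.
  by rewrite ler_wpM2l // -[leRHS]/((r S)%:Z%:~R) ler_int kI.
rewrite sum_p -[RHS]mean big_seq [RHS]big_seq.
by apply: eq_bigr => k ks; have [[kE _] _] := sB k ks; rewrite kE.
Qed.

Lemma in_PM_plus_tnabla_indep y : in_PM_plus_tnabla r t y ->
  indep r y /\ \sum_i y i + t%:Z = (r setT)%:Z.
Proof.
case=> p [lam [pPM lam0 lam1 ylam]]; have [pI pE] := in_PM_sum pPM.
have sum_y S : (\sum_(i in S) y i)%:~R = \sum_(i in S) p i - t%:R * \sum_(i in S) lam i.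
  by rewrite mulrz_sumr; under eq_bigr do rewrite ylam; rewrite sumrB mulr_sumr.
split=> [S|].
  rewrite -(ler_int rat) sum_y (le_trans _ (pI S)) // lerBlDr lerDl.
  by apply: mulr_ge0 (ler0n _ _) (sumr_ge0 _ _).
apply/eqP; rewrite -(eqr_int rat) intrD -sum_setT sum_y !sum_setT pE lam1.
by rewrite mulr1 subrK.
Qed.

Lemma in_active_simplex_of_gap y g : (0 < n)%N ->
  (forall i, y i <= g i) -> \sum_i (g i - y i) = t%:Z ->
  (forall i, y i < g i -> internally_active r g i) ->
  in_active_simplex r t g y.
Proof.
move=> n0 yg gap_t gap_active; have [t0|t_pos] := eqVneq t 0%N.
  have gy i : g i = y i.
    move/eqP: gap_t; rewrite t0 psumr_eq0 => [/allP gy|j _]; last by rewrite subr_ge0.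
    by apply/eqP; rewrite -subr_eq0; apply: gy; rewrite mem_index_enum.
  (* For t = 0 any active element will do, and the smallest one always is. *)
  pose u0 : 'I_n := Ordinal n0.
  exists (fun i => (i == u0)%:R); split=> [i|i||i].
  - exact: ler0n.
  - by case: (eqVneq i u0) => [-> _ v|_ /eqP[]].
  - by rewrite (bigD1 u0) //= big1 ?addr0 // => j /negbTE ->.
  - by rewrite t0 mul0r subr0 gy.
have t_neq0 : t%:R != 0 :> rat by rewrite pnatr_eq0.
exists (fun i => (g i - y i)%:~R / t%:R); split=> [i|i||i].
- by rewrite divr_ge0 ?ler0n // ler0z subr_ge0.
- rewrite mulf_eq0 negb_or intr_eq0 subr_eq0 => /andP[gyi _].
  by apply: gap_active; rewrite lt_neqAle eq_sym gyi yg.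
- by rewrite -mulr_suml -mulrz_sumr gap_t mulfV.
- by rewrite mulrC divfK // intrB; ring.
Qed.

Lemma in_PM_plus_tnabla_covered y : polymatroid r -> in_PM_plus_tnabla r t y ->
  exists f, is_base r f /\ in_active_simplex r t f y.
Proof.
move=> rP yP; have [yI yE] := in_PM_plus_tnabla_indep yP.
have n0 : (0 < n)%N.
  case: yP => p [lam [_ _ lam1 _]]; case: n lam lam1 => // lam.
  by rewrite big_ord0.
have [f0 f0B yf0] := indep_below_base rP yI yE.
have [g gB [yg g_active]] := active_base_above f0B yf0.
exists g; split=> //; apply: in_active_simplex_of_gap => //.
by case: gB => gE _; rewrite sumrB gE -yE addrC addKr.
Qed.

Lemma in_active_simplex_in_PM_plus_tnabla f y :
  is_base r f -> in_active_simplex r t f y -> in_PM_plus_tnabla r t y.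
Proof.
move=> fB [lam [lam0 _ lam1 ylam]]; exists (fun i => (f i)%:~R), lam; split=> //.
exists [:: (f, 1)]; split=> [k|//|i]; last by rewrite big_seq1 mul1r.
  by rewrite inE => /eqP ->.
by rewrite big_seq1.
Qed.

End Covering.

Theorem mainTheorem15 (n : nat) (r : {set 'I_n} -> nat) (t : nat) :
  polymatroid r ->
  (forall f g y : {ffun 'I_n -> int},
      is_base r f -> is_base r g ->
      in_active_simplex r t f y -> in_active_simplex r t g y -> f = g) /\
  (forall y : {ffun 'I_n -> int},
      in_PM_plus_tnabla r t y <->
      exists f : {ffun 'I_n -> int}, is_base r f /\ in_active_simplex r t f y).
Proof.
move=> rP; split=> [f g y|y]; first exact: active_simplex_disjoint.
split; first exact: in_PM_plus_tnabla_covered.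
by case=> f [fB yf]; apply: in_active_simplex_in_PM_plus_tnabla fB yf.
Qed.
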